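(* There is a formula $\phi_{\subseteq}(X_l,X_r,Y_l,Y_r)$ in the signature of $\mathcal{W}(I)$ such that for all $A,B\in\mathcal{P}_{\mathrm{fci}}(I)$, $$A\subseteq B\iff \mathcal{W}(I)\models\phi_{\subseteq}(l(A),r(A),l(B),r(B)).$$
   Context: Let $I$ be a dense linear order with left endpoint $0$ and no right endpoint. Let $\mathcal{P}_{\mathrm{fci}}(I)$ be the set of finite unions of closed intervals $[i,j]$, $[i,+\infty)$, $(-\infty,j]$ of $I$. For $A\in\mathcal{P}_{\mathrm{fci}}(I)$, $l(A)$ and $r(A)$ are the finite sets of left and right endpoints of $A$. Left endpoints are the minima of the maximal closed intervals composing $A$, and right endpoints are the maxima of the bounded ones. $\mathcal{W}(I)$ has universe the finite subsets of $I$ and signature $\{\cup,\cap,\bot,c_0,\min,\max,\mathrm{ips}\}$, interpreted as follows. - $\cup$ and $\cap$ are union and intersection. - $\bot$ is $\emptyset$, and $c_0$ is $\{0\}$. - $\min$ and $\max$ send a nonempty set to the singleton of its minimum, respectively maximum, and fix $\emptyset$. - $\mathrm{ips}(A,B)=\{i\in A: s_A(i)\in B\}$, where $s_A$ is the successor function of $A$. *)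

From Stdlib Require Import List Arith.
Import ListNotations.

Definition pset (T : Type) := T -> Prop.

Section Defs.
Variable T : Type.
Variable lt : T -> T -> Prop.
Variable zero : T.

Definition le (x y : T) : Prop := lt x y \/ x = y.

Definition is_dlo0 : Prop :=
  (forall x, ~ lt x x) /\
  (forall x y z, lt x y -> lt y z -> lt x z) /\
  (forall x y, lt x y \/ x = y \/ lt y x) /\
  (forall x y, lt x y -> exists z, lt x z /\ lt z y) /\
  (forall x, le zero x) /\
  (forall x, exists y, lt x y).

Definition seteq (A B : pset T) : Prop := forall x, A x <-> B x.
Definition subset (A B : pset T) : Prop := forall x, A x -> B x.
Definition finite (A : pset T) : Prop := exists l : list T, forall x, A x <-> In x l.

Definition s_union (A B : pset T) : pset T := fun x => A x \/ B x.
Definition s_inter (A B : pset T) : pset T := fun x => A x /\ B x.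
Definition s_bot : pset T := fun _ => False.
Definition s_c0 : pset T := fun x => x = zero.
(* {min A} if A nonempty, empty otherwise *)
Definition s_min (A : pset T) : pset T := fun x => A x /\ forall y, A y -> le x y.
Definition s_max (A : pset T) : pset T := fun x => A x /\ forall y, A y -> le y x.
Definition succ_in (A : pset T) (i j : T) : Prop :=
  A j /\ lt i j /\ forall k, A k -> lt i k -> le j k.
Definition s_ips (A B : pset T) : pset T :=
  fun i => A i /\ exists j, succ_in A i j /\ B j.

End Defs.
Arguments s_union {T}. Arguments s_inter {T}. Arguments s_c0 {T}. Arguments s_min {T}. Arguments s_max {T}. Arguments s_ips {T}. Arguments seteq {T}. Arguments subset {T}. Arguments finite {T}. Arguments le {T}. Arguments is_dlo0 {T}. Arguments succ_in {T}.

Inductive term : Type :=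
| TVar (n : nat)
| TUnion (t u : term)
| TInter (t u : term)
| TBot
| TC0
| TMin (t : term)
| TMax (t : term)
| TIps (t u : term).

Inductive form : Type :=
| FEq (t u : term)
| FTrue
| FFalse
| FNot (f : form)
| FAnd (f g : form)
| FOr (f g : form)
| FImp (f g : form)
| FAll (n : nat) (f : form)
| FEx (n : nat) (f : form).

Section Sem.
Variable T : Type.
Variable lt : T -> T -> Prop.
Variable zero : T.

Definition env := nat -> pset T.
Definition upd (e : env) (n : nat) (X : pset T) : env :=
  fun m => if Nat.eqb m n then X else e m.

Fixpoint teval (e : env) (t : term) : pset T :=
  match t with
  | TVar n => e n
  | TUnion t u => s_union (teval e t) (teval e u)
  | TInter t u => s_inter (teval e t) (teval e u)
  | TBot => s_bot T
  | TC0 => s_c0 zero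
  | TMin t => s_min lt (teval e t)
  | TMax t => s_max lt (teval e t)
  | TIps t u => s_ips lt (teval e t) (teval e u)
  end.

Fixpoint sat (e : env) (f : form) : Prop :=
  match f with
  | FEq t u => seteq (teval e t) (teval e u)
  | FTrue => True
  | FFalse => False
  | FNot f => ~ sat e f
  | FAnd f g => sat e f /\ sat e g
  | FOr f g => sat e f \/ sat e g
  | FImp f g => sat e f -> sat e g
  | FAll n f => forall X, finite X -> sat (upd e n X) f
  | FEx n f => exists X, finite X /\ sat (upd e n X) f
  end.

Definition env4 (X0 X1 X2 X3 : pset T) : env :=
  fun n => match n with
           | 0 => X0 | 1 => X1 | 2 => X2 | 3 => X3 | _ => s_bot T end.

Inductive cint : Type :=
| CC (i j : T)   (* [i,j] *)
| CR (i : T)     (* [i,+oo) *)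
| CL (j : T).    (* (-oo,j] *)

Definition iset (c : cint) : pset T :=
  match c with
  | CC i j => fun x => le lt i x /\ le lt x j
  | CR i => fun x => le lt i x
  | CL j => fun x => le lt x j
  end.

Definition Pfci (A : pset T) : Prop :=
  exists cs : list cint, forall x, A x <-> Exists (fun c => iset c x) cs.

Definition closed_interval (J : pset T) : Prop :=
  exists c : cint,
    (match c with CC i j => le lt i j | _ => True end) /\ seteq J (iset c).

Definition max_cint (A J : pset T) : Prop :=
  closed_interval J /\ subset J A /\
  forall K, closed_interval K -> subset J K -> subset K A -> subset K J.

Definition lends (A : pset T) : pset T :=
  fun i => exists J, max_cint A J /\ J i /\ forall y, J y -> le lt i y.
Definition rends (A : pset T) : pset T :=
  fun j => exists J, max_cint A J /\ J j /\ forall y, J y -> le lt y j.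

End Sem.
Arguments teval {T}. Arguments sat {T}. Arguments env4 {T}. Arguments Pfci {T}. Arguments lends {T}. Arguments rends {T}. Arguments iset {T}. Arguments closed_interval {T}. Arguments max_cint {T}. Arguments upd {T}.

(** A set [A] in P_fci(I) is a finite disjoint union of maximal closed
    intervals, so a point [x] lies in [A] iff some left endpoint [l <= x] of
    [A] is followed by no right endpoint of [A] in [[l, x)].  Singletons are
    definable in W(I) (the [X] with [min X = X <> ⊥]), points compare through
    [min ({a} ∪ {b}) = {a}] and membership reads [{a} ∩ X = {a}], so this
    criterion is first-order in [l(A)] and [r(A)]; inclusion [A ⊆ B] says that
    it transfers from [A] to [B] at every point. *)

From Pilot Require Import Defs.
From Stdlib Require Import List Arith Lia Classical Setoid
  FunctionalExtensionality PropExtensionality.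
Import ListNotations.

Lemma list_least (U : Type) (R : U -> U -> Prop) (P : U -> Prop) (E : list U) :
  (forall x y z, R x y -> R y z -> R x z) -> (forall x y, R x y \/ R y x) ->
  forall e, In e E -> P e -> exists m, P m /\ forall e', In e' E -> P e' -> R m e'.
Proof.
  intros Rtrans Rtotal. induction E as [|a E IH]; intros e He Pe; [destruct He|].
  assert (Raa : R a a) by (destruct (Rtotal a a); auto).
  destruct (classic (exists e1, In e1 E /\ P e1)) as [[e1 [He1 Pe1]]|Hnone].
  - destruct (IH e1 He1 Pe1) as [m [Pm Hm]].
    destruct (classic (P a /\ R a m)) as [[Pa Ram]|Ham].
    + exists a. split; auto. intros e' [<-|He'] Pe'; eauto.
    + exists m. split; auto. intros e' [<-|He'] Pe'; auto.
      destruct (Rtotal m a); auto. exfalso; auto.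
  - destruct He as [->|He]; [|exfalso; eauto].
    exists e. split; auto. intros e' [<-|He'] Pe'; [auto|exfalso; eauto].
Qed.

Definition f_sing (n : nat) : form :=
  FAnd (FNot (FEq (TVar n) TBot)) (FEq (TMin (TVar n)) (TVar n)).
Definition f_sub (n m : nat) : form := FEq (TInter (TVar n) (TVar m)) (TVar n).
Definition f_le (n m : nat) : form := FEq (TMin (TUnion (TVar n) (TVar m))) (TVar n).
Definition f_all_pt (n : nat) (f : form) : form := FAll n (FImp (f_sing n) f).
Definition f_ex_pt (n : nat) (f : form) : form := FEx n (FAnd (f_sing n) f).

Definition f_between (x l r : nat) : form :=
  f_ex_pt 5 (FAnd (f_sub 5 l) (FAnd (f_le 5 x)
    (f_all_pt 6 (FImp (FAnd (f_sub 6 r) (f_le 5 6)) (f_le x 6))))).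

Section LinearOrder.
Variable T : Type.
Variable lt : T -> T -> Prop.
Variable zero : T.
Hypothesis lt_irrefl : forall x, ~ lt x x.
Hypothesis lt_trans : forall x y z, lt x y -> lt y z -> lt x z.
Hypothesis lt_trichotomy : forall x y, lt x y \/ x = y \/ lt y x.
Hypothesis zero_le : forall x, le lt zero x.

Local Notation le := (Defs.le lt).

Lemma le_refl x : le x x.
Proof. now right. Qed.

Lemma lt_le x y : lt x y -> le x y.
Proof. now left. Qed.

Lemma le_trans x y z : le x y -> le y z -> le x z.
Proof. intros [Hxy|Hxy] [Hyz|Hyz]; subst; [left; eauto|left..|right]; auto. Qed.

Lemma le_antisym x y : le x y -> le y x -> x = y.
Proof. intros [Hxy|Hxy] [Hyx|Hyx]; subst; auto. exfalso; apply (lt_irrefl x); eauto. Qed.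

Lemma le_or_lt x y : le x y \/ lt y x.
Proof. destruct (lt_trichotomy x y) as [H|[H|H]]; [left; left|left; right|right]; auto. Qed.

Lemma le_total x y : le x y \/ le y x.
Proof. destruct (le_or_lt x y); auto using lt_le. Qed.

Lemma lt_not_ge x y : lt x y -> ~ le y x.
Proof. intros Hxy [Hyx|Hyx]; [|rewrite Hyx in Hxy]; apply (lt_irrefl x); eauto. Qed.

Definition seg (A : pset T) (a b : T) : Prop := forall y, le a y -> le y b -> A y.

Lemma seg_point (A : pset T) x : A x -> seg A x x.
Proof. intros Ax y Hxy Hyx. now rewrite (le_antisym y x). Qed.

Lemma seg_cat (A : pset T) a b c : seg A a b -> seg A b c -> seg A a c.
Proof.
  intros Hab Hbc y Hay Hyc.
  destruct (le_or_lt y b); [apply Hab|apply Hbc]; auto using lt_le.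
Qed.

Lemma closed_interval_seg K a b : closed_interval lt K -> K a -> K b -> seg K a b.
Proof.
  intros [c [_ HK]] Ka Kb y Hay Hyb. apply HK. apply HK in Ka, Kb.
  destruct c; simpl in *; [destruct Ka, Kb; split|..]; eauto using le_trans.
Qed.

Lemma closed_interval_min K : closed_interval lt K -> exists m, K m /\ forall y, K y -> le m y.
Proof.
  intros [c [Hc HK]]. destruct c as [i j|i|j].
  - exists i. split; [apply HK; simpl; split; auto using le_refl|].
    intros y Ky. apply HK in Ky. apply Ky.
  - exists i. split; [apply HK; apply le_refl|]. intros y Ky. now apply HK in Ky.
  - exists zero. split; [apply HK; apply zero_le|]. auto.
Qed.

Lemma closed_interval_max_or_upward K : closed_interval lt K ->
  (exists m, K m /\ forall y, K y -> le y m) \/ (forall y z, K y -> le y z -> K z).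
Proof.
  intros [c [Hc HK]]. destruct c as [i j|i|j].
  - left. exists j. split; [apply HK; simpl; split; auto using le_refl|].
    intros y Ky. apply HK in Ky. apply Ky.
  - right. intros y z Ky Hyz. apply HK in Ky. apply HK. simpl in *. eauto using le_trans.
  - left. exists j. split; [apply HK; apply le_refl|]. intros y Ky. now apply HK in Ky.
Qed.

Definition cint_lo (c : cint T) : T :=
  match c with CC _ i _ | CR _ i => i | CL _ _ => zero end.
(* junk value [i] on [CR i], which has no upper end *)
Definition cint_hi (c : cint T) : T :=
  match c with CC _ _ j | CL _ j => j | CR _ i => i end.

Lemma iset_lo c y : iset lt c y -> le (cint_lo c) y /\ seg (iset lt c) (cint_lo c) y.
Proof.
  destruct c; simpl; intros Hy.
  - split; [apply Hy|]. intros z Hiz Hzy. split; [exact Hiz|].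
    apply le_trans with y; [exact Hzy|apply Hy].
  - split; auto. intros z Hiz _. exact Hiz.
  - split; [apply zero_le|]. intros z _ Hzy. eauto using le_trans.
Qed.

Lemma iset_hi c y : iset lt c y ->
  (forall z, le y z -> iset lt c z) \/ (le y (cint_hi c) /\ seg (iset lt c) y (cint_hi c)).
Proof.
  destruct c; simpl; intros Hy.
  - right. split; [apply Hy|]. intros z Hyz Hzj. split; [|exact Hzj].
    apply le_trans with y; [apply Hy|exact Hyz].
  - left. intros z Hyz. eauto using le_trans.
  - right. split; auto. intros z _ Hzj. exact Hzj.
Qed.

Lemma Pfci_cover A : Pfci lt A ->
  exists cs, forall y, A y <-> exists c, In c cs /\ iset lt c y.
Proof. intros [cs Hcs]. exists cs. intros y. rewrite Hcs. apply Exists_exists. Qed.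

Lemma Pfci_left_end A x : Pfci lt A -> A x ->
  exists l, le l x /\ seg A l x /\ forall y, le y x -> seg A y x -> le l y.
Proof.
  intros PA Ax. destruct (Pfci_cover A PA) as [cs Hcs].
  assert (Hlo : forall y, A y ->
            exists c, In c cs /\ le (cint_lo c) y /\ seg A (cint_lo c) y).
  { intros y Ay. destruct (proj1 (Hcs y) Ay) as [c [Hc Hyc]].
    destruct (iset_lo c y Hyc) as [Hle Hseg].
    exists c. repeat split; auto. intros z Hz1 Hz2. apply Hcs. eauto. }
  destruct (Hlo x Ax) as [c0 [Hc0 H0]].
  destruct (list_least _ le (fun e => le e x /\ seg A e x) (map cint_lo cs)
              le_trans le_total (cint_lo c0)) as [l [[Hlx Hl] Hmin]];
    [now apply in_map|exact H0|].
  exists l. repeat split; auto. intros y Hyx Hy.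
  destruct (Hlo y (Hy y (le_refl y) Hyx)) as [c [Hc [Hcy Hcseg]]].
  apply le_trans with (cint_lo c); auto.
  apply Hmin; [now apply in_map|]. split; [eapply le_trans|eapply seg_cat]; eauto.
Qed.

Lemma Pfci_right_end A x : Pfci lt A -> A x -> (exists z, le x z /\ ~ A z) ->
  exists r, le x r /\ seg A x r /\ forall y, le x y -> seg A x y -> le y r.
Proof.
  intros PA Ax [z0 [Hxz0 Hz0]]. destruct (Pfci_cover A PA) as [cs Hcs].
  assert (Hhi : forall y, le x y -> seg A x y ->
            exists c, In c cs /\ le y (cint_hi c) /\ seg A y (cint_hi c)).
  { intros y Hxy Hsxy. destruct (proj1 (Hcs y) (Hsxy y Hxy (le_refl y))) as [c [Hc Hyc]].
    destruct (iset_hi c y Hyc) as [Hup|[Hle Hseg]].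
    - exfalso. apply Hz0. apply (seg_cat A x y z0); auto using le_refl.
      intros z Hyz _. apply Hcs. eauto.
    - exists c. repeat split; auto. intros z Hz1 Hz2. apply Hcs. eauto. }
  destruct (Hhi x (le_refl x) (seg_point A x Ax)) as [c0 [Hc0 H0]].
  destruct (list_least _ (fun a b => le b a) (fun e => le x e /\ seg A x e)
              (map cint_hi cs) (fun a b c Hba Hcb => le_trans c b a Hcb Hba)
              (fun a b => le_total b a) (cint_hi c0)) as [r [[Hxr Hr] Hmax]];
    [now apply in_map|exact H0|].
  exists r. repeat split; auto. intros y Hxy Hy.
  destruct (Hhi y Hxy Hy) as [c [Hc [Hyc Hcseg]]].
  apply le_trans with (cint_hi c); auto.
  apply Hmax; [now apply in_map|]. split; [eapply le_trans|eapply seg_cat]; eauto.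
Qed.

Lemma max_cint_through A x : Pfci lt A -> A x -> exists J, max_cint lt A J /\ J x.
Proof.
  intros PA Ax. destruct (Pfci_left_end A x PA Ax) as [l [Hlx [Hl Hlmin]]].
  assert (Hleft : forall K z, closed_interval lt K -> subset K A -> K x -> K z -> le l z).
  { intros K z HK HKA Kx Kz. destruct (le_or_lt z x) as [Hzx|Hxz].
    - apply Hlmin; auto. intros y Hzy Hyx. apply HKA, (closed_interval_seg K z x); auto.
    - apply le_trans with x; auto using lt_le. }
  destruct (classic (exists z, le x z /\ ~ A z)) as [Hbdd|Hunbdd].
  - destruct (Pfci_right_end A x PA Ax Hbdd) as [r [Hxr [Hr Hrmax]]].
    assert (Hright : forall K z, closed_interval lt K -> subset K A -> K x -> K z -> le z r).
    { intros K z HK HKA Kx Kz. destruct (le_or_lt x z) as [Hxz|Hzx].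
      - apply Hrmax; auto. intros y Hxy Hyz. apply HKA, (closed_interval_seg K x z); auto.
      - apply le_trans with x; auto using lt_le. }
    exists (iset lt (CC T l r)). split; [split; [|split]|split; auto].
    + exists (CC T l r). split; [eapply le_trans; eauto|intro; reflexivity].
    + intros z [Hlz Hzr]. apply (seg_cat A l x r); auto.
    + intros K HK HJK HKA z Kz. assert (Kx : K x) by (apply HJK; split; auto).
      split; eauto.
  - exists (iset lt (CR T l)). split; [split; [|split]|auto].
    + exists (CR T l). split; [exact I|intro; reflexivity].
    + intros z Hlz. destruct (le_or_lt z x) as [Hzx|Hxz]; [apply Hl; auto|].
      apply NNPP. intros Hz. apply Hunbdd. exists z. auto using lt_le.
    + intros K HK HJK HKA z Kz. apply (Hleft K); auto.
Qed.

Definition between_ends (L R : pset T) (x : T) : Prop :=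
  exists l, L l /\ le l x /\ forall r, R r -> le l r -> le x r.

Lemma between_ends_of_mem A x : Pfci lt A -> A x -> between_ends (lends lt A) (rends lt A) x.
Proof.
  intros PA Ax. destruct (max_cint_through A x PA Ax) as [J [HJ Jx]].
  pose proof HJ as (HJc & HJA & _).
  destruct (closed_interval_min J HJc) as [m [Jm Hm]].
  exists m. split; [exists J; auto|split; auto].
  intros r [J' [(HJ'c & HJ'A & HJ'max) [J'r Hr]]] Hmr.
  destruct (le_or_lt x r) as [|Hrx]; auto. exfalso.
  destruct (closed_interval_min J' HJ'c) as [m' [J'm' Hm']].
  assert (Jr : J r) by (apply (closed_interval_seg J m x); auto using lt_le).
  assert (Hm'x : le m' x) by (apply le_trans with r; auto using lt_le).
  (* otherwise [[m', x]] would be a closed interval of [A] extending [J'] *)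
  assert (J'x : J' x).
  { apply (HJ'max (iset lt (CC T m' x))).
    - exists (CC T m' x). split; [exact Hm'x|intro; reflexivity].
    - intros y Hy. split; auto. apply le_trans with r; auto using lt_le.
    - intros y [Hm'y Hyx]. apply (seg_cat A m' r x); auto.
      + intros z Hz1 Hz2. apply HJ'A, (closed_interval_seg J' m' r); auto.
      + intros z Hz1 Hz2. apply HJA, (closed_interval_seg J r x); auto.
    - split; auto using le_refl. }
  exact (lt_not_ge r x Hrx (Hr x J'x)).
Qed.

Lemma mem_of_between_ends A x : between_ends (lends lt A) (rends lt A) x -> A x.
Proof.
  intros [l [[J [HJ [Jl Hl]]] [Hlx Hr]]]. pose proof HJ as (HJc & HJA & _).
  apply HJA. destruct (closed_interval_max_or_upward J HJc) as [[m [Jm Hm]]|Hup].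
  - apply (closed_interval_seg J l m); auto. apply Hr; auto. exists J. auto.
  - eauto.
Qed.

Lemma subset_iff_between_ends A B : Pfci lt A -> Pfci lt B ->
  subset A B <-> forall x, between_ends (lends lt A) (rends lt A) x ->
                           between_ends (lends lt B) (rends lt B) x.
Proof.
  intros PA PB. split; intros H x Hx.
  - apply between_ends_of_mem, H, (mem_of_between_ends A); auto.
  - apply (mem_of_between_ends B), H, between_ends_of_mem; auto.
Qed.

Definition pt (a : T) : pset T := fun y => y = a.

Lemma finite_pt a : finite (pt a).
Proof. exists [a]. intros y. unfold pt; simpl. intuition. Qed.

Lemma pt_of_seteq (X : pset T) a : seteq X (pt a) -> X = pt a.
Proof. intros H. extensionality y. apply propositional_extensionality, H. Qed.

Lemma upd_same (e : env T) n X : upd e n X n = X.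
Proof. unfold upd. now rewrite Nat.eqb_refl. Qed.

Lemma upd_other (e : env T) n m X : m <> n -> upd e n X m = e m.
Proof. intros H. unfold upd. apply Nat.eqb_neq in H. now rewrite H. Qed.

Lemma sat_f_sing e n : sat lt zero e (f_sing n) <-> exists a, e n = pt a.
Proof.
  unfold f_sing. cbn [sat teval]. unfold seteq, s_bot, s_min. split.
  - intros [Hne Hmin]. apply NNPP. intros Hno. apply Hne. intros y. split; [|tauto].
    intros Hy. apply Hno. exists y. apply pt_of_seteq. intros z. unfold pt.
    split; [|intros ->; auto]. intros Hz.
    apply le_antisym; [apply (proj2 (Hmin z) Hz)|apply (proj2 (Hmin y) Hy)]; auto.
  - intros [a Ha]. rewrite Ha. unfold pt. split.
    + intros H. now apply (H a).
    + intros y. split; [tauto|]. intros ->. split; [reflexivity|]. intros y ->. apply le_refl.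
Qed.

Lemma sat_f_sub e n m a : e n = pt a -> (sat lt zero e (f_sub n m) <-> e m a).
Proof.
  intros Ha. unfold f_sub. cbn [sat teval]. unfold seteq, s_inter. rewrite Ha. unfold pt. split.
  - intros H. now apply (H a).
  - intros Hm y. split; [tauto|]. intros ->. auto.
Qed.

Lemma sat_f_le e n m a b : e n = pt a -> e m = pt b ->
  (sat lt zero e (f_le n m) <-> le a b).
Proof.
  intros Ha Hb. unfold f_le. cbn [sat teval]. unfold seteq, s_min, s_union. rewrite Ha, Hb. unfold pt. split.
  - intros H. destruct (proj2 (H a) eq_refl) as [_ Hmin]. apply Hmin. now right.
  - intros Hab y. split.
    + intros [[-> | ->] Hmin]; auto. apply le_antisym; auto.
    + intros ->. split; [now left|]. intros y [-> | ->]; auto using le_refl.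
Qed.

Lemma sat_f_all_pt e n f :
  sat lt zero e (f_all_pt n f) <-> forall a, sat lt zero (upd e n (pt a)) f.
Proof.
  unfold f_all_pt. cbn [sat]. split.
  - intros H a. apply H; [apply finite_pt|]. apply sat_f_sing. exists a. apply upd_same.
  - intros H X _ HX. apply sat_f_sing in HX. destruct HX as [a Ha].
    rewrite upd_same in Ha. rewrite Ha. apply H.
Qed.

Lemma sat_f_ex_pt e n f :
  sat lt zero e (f_ex_pt n f) <-> exists a, sat lt zero (upd e n (pt a)) f.
Proof.
  unfold f_ex_pt. cbn [sat]. split.
  - intros [X [_ [HX Hf]]]. apply sat_f_sing in HX. destruct HX as [a Ha].
    rewrite upd_same in Ha. rewrite Ha in Hf. eauto.
  - intros [a Hf]. exists (pt a). split; [apply finite_pt|split; [|exact Hf]].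
    apply sat_f_sing. exists a. apply upd_same.
Qed.

Lemma sat_f_between e x l r c : x < 5 -> l < 5 -> r < 5 -> e x = pt c ->
  sat lt zero e (f_between x l r) <-> between_ends (e l) (e r) c.
Proof.
  intros Hx Hl Hr Hc. unfold f_between, between_ends. rewrite sat_f_ex_pt.
  apply Morphisms_Prop.ex_iff_morphism. intros a. cbn [sat].
  set (e1 := upd e 5 (pt a)).
  assert (E1a : e1 5 = pt a) by apply upd_same.
  assert (E1 : forall m, m < 5 -> e1 m = e m) by (intros; apply upd_other; lia).
  rewrite (sat_f_sub e1 5 l a E1a), (sat_f_le e1 5 x a c E1a), E1, sat_f_all_pt
    by (rewrite ?E1; auto).
  apply and_iff_compat_l, and_iff_compat_l.
  assert (Hb : forall b, sat lt zero (upd e1 6 (pt b))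
                  (FImp (FAnd (f_sub 6 r) (f_le 5 6)) (f_le x 6))
                <-> (e r b -> le a b -> le c b)).
  { intros b. cbn [sat]. set (e2 := upd e1 6 (pt b)).
    assert (E2b : e2 6 = pt b) by apply upd_same.
    assert (E2 : forall m, m < 5 -> e2 m = e m)
      by (intros; unfold e2; rewrite upd_other, E1; auto; lia).
    assert (E2a : e2 5 = pt a) by (unfold e2; rewrite upd_other; auto).
    assert (E2x : e2 x = pt c) by (rewrite E2; auto).
    rewrite (sat_f_sub e2 6 r b E2b), (sat_f_le e2 5 6 a b E2a E2b),
      (sat_f_le e2 x 6 c b E2x E2b), E2 by exact Hr.
    tauto. }
  split; intros H b; apply Hb, H.
Qed.

End LinearOrder.

Theorem proposition6p3 (T : Type) (lt : T -> T -> Prop) (zero : T)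
  (HI : is_dlo0 lt zero) :
  exists phi : form,
    forall A B : pset T, Pfci lt A -> Pfci lt B ->
      (subset A B <->
       sat lt zero (env4 (lends lt A) (rends lt A) (lends lt B) (rends lt B)) phi).
Proof.
  destruct HI as (Hirr & Htrans & Htri & _ & Hzero & _).
  exists (f_all_pt 4 (FImp (f_between 4 0 1) (f_between 4 2 3))).
  intros A B PA PB.
  rewrite (subset_iff_between_ends T lt zero Hirr Htrans Htri Hzero A B PA PB).
  rewrite (sat_f_all_pt T lt zero Hirr Htrans).
  split; intros H c; specialize (H c); cbn [sat] in *;
    rewrite !(sat_f_between T lt zero Hirr Htrans) in * by (apply upd_same || lia);
    exact H.
Qed.
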